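(* Let $n\geq 1$. There is no non-trivial u-p-cycle $u=u_1\cdots u_N$ for $n$-permutations in which the $\Diamond$'s occur periodically with period $3$, i.e., in which $3$ divides $N$ and there is $r\in\{0,1,2\}$ such that for every position $i$, $u_i=\Diamond$ if and only if $i\equiv r\pmod 3$.
   Context: An $n$-permutation is a permutation of $\{1,\ldots,n\}$. For a word $w$ of distinct numbers, $\mathrm{red}(w)$ is obtained by replacing the $i$-th smallest letter by $i$. Let $\Diamond$ be a symbol not among the integers. A word $f=f_1\cdots f_n$ over the positive integers together with $\Diamond$, whose integer letters are pairwise distinct, covers an $n$-permutation $\pi$ if one can substitute real numbers for the occurrences of $\Diamond$ (independently) so that the resulting word has $n$ pairwise distinct entries and reduces to $\pi$; equivalently, $f_i<f_j\iff\pi_i<\pi_j$ for all positions $i,j$ holding integers. A u-p-cycle for $n$-permutations is a cyclic word $u_1\cdots u_N$, $N\geq n$, over this alphabet containing at least one $\Diamond$, indices read modulo $N$, such that each of its $N$ cyclic factors $u_iu_{i+1}\cdots u_{i+n-1}$ ($1\leq i\leq N$) has pairwise distinct integer letters and every $n$-permutation is covered by exactly one of these factors. It is trivial if all its letters are $\Diamond$. *)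

From mathcomp Require Import all_boot all_fingroup.
Set Implicit Arguments. Unset Strict Implicit. Unset Printing Implicit Defensive.

(* Letters: [None] is the symbol Diamond, [Some k] is the integer k. *)
Definition letter := option nat.

Definition covers (n : nat) (f : seq letter) (pi : 'S_n) : Prop :=
  size f = n /\
  forall (i j : 'I_n) (a b : nat),
    nth None f i = Some a -> nth None f j = Some b ->
    (a < b) = (pi i < pi j).

Definition distinct_ints (f : seq letter) : Prop := uniq (pmap id f).

(* the cyclic factor u_i ... u_{i+n-1} (0-based start i, indices mod N) *)
Definition cfactor (u : seq letter) (n i : nat) : seq letter :=
  [seq nth None u ((i + j) %% size u) | j <- iota 0 n].

Definition is_upcycle (n : nat) (u : seq letter) : Prop :=
  let N := size u in
  [/\ n <= N,
      all (fun x => if x is Some k then 0 < k else true) u,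
      None \in u,
      (forall i, i < N -> distinct_ints (cfactor u n i)) &
      (forall pi : 'S_n, exists! i : 'I_N, covers (cfactor u n i) pi)].

Definition trivial_cycle (u : seq letter) : Prop := all (fun x => x == None) u.

(* Diamonds occur with period 3, with 1-based positions 1..N. *)
Definition diamonds_period3 (u : seq letter) : Prop :=
  3 %| size u /\
  exists r, r < 3 /\
    forall i, i < size u -> (nth None u i = None <-> i.+1 = r %[mod 3]).

From mathcomp Require Import all_boot all_fingroup.
From mathcomp Require Import zify.

(* Some window s covers the identity, i.e. its integer letters increase.  As the
   diamonds are 3-periodic, one of the windows starting at s - 1, s + 1 or s + 2
   is also increasing, except at a single position e where window s holds a
   diamond (or e lies outside the window).  Inserting e at the right rank into
   the identity order then yields a permutation covered by both windows,
   contradicting uniqueness. *)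

Set Implicit Arguments.
Unset Strict Implicit.
Unset Printing Implicit Defensive.

Definition increasing_except (e : nat) (w : seq letter) : Prop :=
  forall i j a b, i < j < size w -> i != e -> j != e ->
    nth None w i = Some a -> nth None w j = Some b -> a < b.

Lemma nth_Some_inj (w : seq letter) i j a :
  distinct_ints w -> i < size w -> j < size w ->
  nth None w i = Some a -> nth None w j = Some a -> i = j.
Proof.
elim: w i j => [|[x|] w IHw] [|i] [|j] //= uniq_w; rewrite ?ltnS;
  try by move=> *; congr _.+1; apply: IHw.
- by move: uniq_w => /andP[+ _] _ jw [<-] wj; rewrite mem_pmap map_id -wj mem_nth.
- by move: uniq_w => /andP[+ _] iw _ wi [xa]; rewrite mem_pmap map_id xa -wi mem_nth.
- by case/andP: uniq_w => _ uniq_w *; congr _.+1; apply: IHw.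
Qed.

Lemma increasing_except_lt e (w : seq letter) i j a b :
  increasing_except e w -> i < size w -> j < size w -> i != e -> j != e ->
  nth None w i = Some a -> nth None w j = Some b -> a < b -> i < j.
Proof.
move=> incr_w iw jw ie je wi wj ab.
case: ltngtP => [// | ji | ij].
- by have := incr_w j i b a; rewrite ji iw ltnNge (ltnW ab) => /(_ isT je ie wj wi).
- by move: wj; rewrite -ij wi => -[ba]; rewrite ba ltnn in ab.
Qed.

Lemma increasing_except_of_covers1 n e (w : seq letter) :
  covers w (1 : 'S_n) -> increasing_except e w.
Proof.
move=> [size_w cov] i j a b /andP[ij]; rewrite size_w => jn _ _ wi wj.
by have := cov (Ordinal (ltn_trans ij jn)) (Ordinal jn) a b wi wj; rewrite !perm1 ij.
Qed.

Lemma perm_of_key n (k : 'I_n -> nat) :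
  injective k -> exists pi : 'S_n, forall i j, (pi i < pi j) = (k i < k j).
Proof.
move=> k_inj.
have rank_lt i : #|[set t | k t < k i]| < n.
  suff: [set t | k t < k i] \proper [set: 'I_n].
    by move/proper_card; rewrite cardsT card_ord.
  by apply/properP; split; [exact: subsetT | exists i; rewrite !inE ?ltnn].
have rank_homo i j : k i < k j -> #|[set t | k t < k i]| < #|[set t | k t < k j]|.
  move=> kij; apply: proper_card; apply/properP; split.
    by apply/subsetP => t; rewrite !inE => /ltn_trans; apply.
  by exists i; rewrite !inE ?ltnn.
have rank_mono i j : (#|[set t | k t < k i]| < #|[set t | k t < k j]|) = (k i < k j).
  case: (ltngtP (k i) (k j)) => [/rank_homo // | /rank_homo/ltnW | /k_inj->].
    by rewrite ltnNge => ->.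
  by rewrite ltnn.
have rank_inj : injective (fun i => Ordinal (rank_lt i)).
  move=> i j [rij]; apply: k_inj.
  by case: (ltngtP (k i) (k j)) => // /rank_homo; rewrite rij ltnn.
by exists (perm rank_inj) => i j; rewrite !permE rank_mono.
Qed.

Lemma covers_of_key n (w : seq letter) (k : 'I_n -> nat) (pi : 'S_n) :
  size w = n -> distinct_ints w -> (forall i j, (pi i < pi j) = (k i < k j)) ->
  (forall (i j : 'I_n) a b, nth None w i = Some a -> nth None w j = Some b ->
     a < b -> k i < k j) ->
  covers w pi.
Proof.
move=> size_w dist_w pi_k k_homo; split=> // i j a b wi wj; rewrite pi_k.
case: (ltngtP a b) => [/(k_homo _ _ _ _ wi wj) -> // | ba | ab].
  by rewrite ltnNge (ltnW (k_homo _ _ _ _ wj wi ba)).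
rewrite -ab in wj.
have ij : i = j by apply: val_inj; apply: (nth_Some_inj dist_w _ _ wi wj); rewrite size_w.
by rewrite ij ltnn.
Qed.

Lemma common_cover n e (w1 w2 : seq letter) :
  size w1 = n -> size w2 = n -> distinct_ints w1 -> distinct_ints w2 ->
  increasing_except e w1 -> increasing_except e w2 ->
  (e < n -> nth None w1 e = None) ->
  exists pi : 'S_n, covers w1 pi /\ covers w2 pi.
Proof.
move=> size1 size2 dist1 dist2 incr1 incr2 w1e.
have in1 (t : 'I_n) : t < size w1 by rewrite size1.
have in2 (t : 'I_n) : t < size w2 by rewrite size2.
pose c := if nth None w2 e is Some c then c else 0.
pose below_c (t : 'I_n) :=
  (t != e :> nat) && (if nth None w2 t is Some x then x < c else false).
pose M := \max_(t | below_c t) t.+1.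
(* Keep the positions other than e in order, and slot e in right after the
   last position holding a smaller letter than e in w2. *)
pose k (t : 'I_n) := if t == e :> nat then 2 * M + 1 else 2 * t + 2.
have k_inj : injective k.
  move=> i j; rewrite /k; case: eqP => ie; case: eqP => je; try lia.
    by move=> _; apply: ord_inj; rewrite ie je.
  by move=> ij; apply: ord_inj; lia.
have [pi pi_k] := perm_of_key k_inj.
exists pi; split; apply: (covers_of_key _ _ pi_k) => // i j a b wi wj ab.
  have off_e (t : 'I_n) x : nth None w1 t = Some x -> t != e :> nat.
    by move=> w1t; apply/eqP => te; move: w1t; rewrite te w1e // -te.
  have [ie je] := (off_e _ _ wi, off_e _ _ wj).
  have := increasing_except_lt incr1 (in1 i) (in1 j) ie je wi wj ab.
  by rewrite /k (negbTE ie) (negbTE je); lia.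
case: (eqVneq (i : nat) e) => ie; case: (eqVneq (j : nat) e) => je.
- have ij : i = j by apply: ord_inj; rewrite ie je.
  by move: wj; rewrite -ij wi => -[ba]; rewrite ba ltnn in ab.
- rewrite /k ie eqxx (negbTE je); suff : M <= j by lia.
  apply/bigmax_leqP => t /andP[te]; case wt: (nth None w2 t) => [x|] // xc.
  have ca : c = a by rewrite /c -ie wi.
  by apply: (increasing_except_lt incr2 (in2 t) (in2 j) te je wt wj); lia.
- rewrite /k je eqxx (negbTE ie).
  have : i.+1 <= M by apply: (leq_bigmax_cond i); rewrite /below_c ie wi /c -je wj.
  lia.
- have := increasing_except_lt incr2 (in2 i) (in2 j) ie je wi wj ab.
  by rewrite /k (negbTE ie) (negbTE je); lia.
Qed.

Section Windows.

Variables (n : nat) (u : seq letter).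

Lemma size_cfactor i : size (cfactor u n i) = n.
Proof. by rewrite size_map size_iota. Qed.

Lemma nth_cfactor i t :
  t < n -> nth None (cfactor u n i) t = nth None u ((i + t) %% size u).
Proof. by move=> tn; rewrite (nth_map 0) ?size_iota // nth_iota. Qed.

Lemma cfactor_mod i : cfactor u n (i %% size u) = cfactor u n i.
Proof. by apply: eq_map => t; rewrite modnDml. Qed.

Lemma increasing_cfactor_shift s d e :
  increasing_except n (cfactor u n s) ->
  (forall i, i < n -> i != e -> n <= d + i ->
     nth None u ((s + d + i) %% size u) = None) ->
  increasing_except e (cfactor u n (s + d)).
Proof.
move=> incr_s diam i j a b /andP[ij]; rewrite size_cfactor => jn ie je.
rewrite !nth_cfactor ?(ltn_trans ij) //.
case: (leqP n (d + j)) => [dj | dj]; first by rewrite (diam j) // => _ [].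
rewrite -!addnA => wi wj.
apply: (incr_s (d + i) (d + j)); rewrite ?size_cfactor ?nth_cfactor //; lia.
Qed.

Lemma increasing_cfactor_unshift s d e :
  d <= size u -> increasing_except n (cfactor u n s) ->
  (forall i, i < d -> i != e ->
     nth None u ((s + (size u - d) + i) %% size u) = None) ->
  increasing_except e (cfactor u n (s + (size u - d))).
Proof.
move=> dN incr_s diam i j a b /andP[ij]; rewrite size_cfactor => jn ie je.
rewrite !nth_cfactor ?(ltn_trans ij) //.
case: (ltnP i d) => [id | di]; first by rewrite diam.
have shift t : d <= t -> s + (size u - d) + t = s + (t - d) + size u by lia.
rewrite !shift ?(leq_trans di (ltnW ij)) // !modnDr => wi wj.
apply: (incr_s (i - d) (j - d)); rewrite ?size_cfactor ?nth_cfactor //; lia.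
Qed.

Hypothesis cyc : is_upcycle n u.

Lemma no_second_window (s : 'I_(size u)) d e :
  covers (cfactor u n s) (1 : 'S_n) -> 0 < d < size u ->
  (e < n -> nth None u ((s + e) %% size u) = None) ->
  increasing_except e (cfactor u n (s + d)) -> False.
Proof.
case: cyc => _ _ _ dist cover cov_s /andP[d0 dN] diam_e incr_sd.
have sdN : (s + d) %% size u < size u by rewrite ltn_pmod //; lia.
have dist_sd : distinct_ints (cfactor u n (s + d)) by rewrite -cfactor_mod; apply: dist.
have diam_s : e < n -> nth None (cfactor u n s) e = None.
  by move=> en; rewrite nth_cfactor ?diam_e.
have [pi [cov1 cov2]] := common_cover (size_cfactor s) (size_cfactor (s + d))
  (dist _ (ltn_ord s)) dist_sd (increasing_except_of_covers1 cov_s) incr_sd diam_s.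
rewrite -cfactor_mod in cov2.
have [t [_ cover_pi]] := cover pi.
have /(congr1 (@nat_of_ord _)) /= :=
  etrans (esym (cover_pi _ cov1)) (cover_pi (Ordinal sdN) cov2).
case: (ltnP (s + d) (size u)) => [sd_lt | sd_ge].
  by rewrite modn_small //; lia.
by rewrite -(subnK sd_ge) modnDr modn_small; have := ltn_ord s; lia.
Qed.

Lemma no_forward_shift (s : 'I_(size u)) d e :
  covers (cfactor u n s) (1 : 'S_n) -> 0 < d < size u ->
  (e < n -> nth None u ((s + e) %% size u) = None) ->
  (forall i, i < n -> i != e -> n <= d + i ->
     nth None u ((s + d + i) %% size u) = None) ->
  False.
Proof.
move=> cov_s dN diam_e diam_shift.
apply: (no_second_window cov_s dN diam_e).
exact: increasing_cfactor_shift (increasing_except_of_covers1 cov_s) diam_shift.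
Qed.

Lemma no_backward_shift (s : 'I_(size u)) d e :
  covers (cfactor u n s) (1 : 'S_n) -> 0 < d < size u ->
  (e < n -> nth None u ((s + e) %% size u) = None) ->
  (forall i, i < d -> i != e ->
     nth None u ((s + (size u - d) + i) %% size u) = None) ->
  False.
Proof.
move=> cov_s dN diam_e diam_shift.
have dN' : 0 < size u - d < size u by lia.
apply: (no_second_window cov_s dN' diam_e).
apply: increasing_cfactor_unshift (increasing_except_of_covers1 cov_s) diam_shift.
lia.
Qed.

End Windows.

Theorem theorem3 (n : nat) (hn : 1 <= n) (u : seq letter) :
  ~ [/\ is_upcycle n u, ~ trivial_cycle u & diamonds_period3 u].
Proof.
(* Non-triviality is automatic: two letters in three are integers. *)
case=> cyc _ [/dvdnP[k Nk] [r [r3 diamond]]].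
have [nN _ _ _ cover] := cyc.
have diamondE p : p.+1 = r %[mod 3] -> nth None u (p %% size u) = None.
  move=> pr; apply/diamond; first by rewrite ltn_pmod //; lia.
  have : p %% size u = p %[mod 3] by rewrite modn_dvdm // Nk dvdn_mull.
  move: (p %% size u) => x; lia.
have [s [cov_s _]] := cover 1%g.
have no_fwd := no_forward_shift cyc cov_s.
have no_bwd := no_backward_shift cyc cov_s.
(* Window s occupies positions s, ..., s + n - 1; the cases locate the diamonds
   at s, s - 1, s + n - 1, s + n, and finally at s + 1 with 3 %| n. *)
case: (eqVneq ((s + 1) %% 3) r) => r_s.
  by apply: (no_bwd 1 0); try lia; move=> *; apply: diamondE; lia.
case: (eqVneq (s %% 3) r) => r_s_pred.
  by apply: (no_bwd 1 n); try lia; move=> *; apply: diamondE; lia.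
case: (eqVneq ((s + n) %% 3) r) => r_last.
  by apply: (no_fwd 1 n.-1); try lia; move=> *; apply: diamondE; lia.
case: (eqVneq ((s + n + 1) %% 3) r) => r_next.
  by apply: (no_fwd 1 n); try lia; move=> *; apply: diamondE; lia.
by apply: (no_fwd 2 (n - 2)); try lia; move=> *; apply: diamondE; lia.
Qed.
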